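(* Let $G$ be a finitely presented group with only finitely many conjugacy classes of finite subgroups, and let $G'$ be a group. If $G$ and $G'$ are $\mathrm{AE}$-equivalent, then there exists a morphism $\varphi:G\to G'$ that is injective on finite subgroups and maps any two non-conjugate finite subgroups of $G$ to non-conjugate finite subgroups of $G'$.
   Context: Two groups are $\mathrm{AE}$-equivalent if they satisfy the same first-order sentences (in the language of groups) of the form $\forall\bar x\exists\bar y\,\theta(\bar x,\bar y)$ with $\theta$ quantifier-free. *)

From Stdlib Require Import List.

Record Group := {
  carrier :> Type;
  gmul : carrier -> carrier -> carrier;
  ginv : carrier -> carrier;
  gone : carrier;
  gmulA : forall x y z, gmul x (gmul y z) = gmul (gmul x y) z;
  gmul1l : forall x, gmul gone x = x;
  gmulVl : forall x, gmul (ginv x) x = gone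
}.

Arguments gmul {g}. Arguments ginv {g}. Arguments gone {g}.

Definition fin (n : nat) : Type := { i : nat | i < n }.

Inductive term (V : Type) : Type :=
| TVar : V -> term V
| TOne : term V
| TMul : term V -> term V -> term V
| TInv : term V -> term V.
Arguments TVar {V}. Arguments TOne {V}. Arguments TMul {V}. Arguments TInv {V}.

Fixpoint teval {G : Group} {V : Type} (e : V -> G) (t : term V) : G :=
  match t with
  | TVar v => e v
  | TOne => gone
  | TMul a b => gmul (teval e a) (teval e b)
  | TInv a => ginv (teval e a)
  end.

Inductive qf (V : Type) : Type :=
| QTrue : qf V
| QEq : term V -> term V -> qf V
| QNot : qf V -> qf V
| QAnd : qf V -> qf V -> qf V
| QOr : qf V -> qf V -> qf V.
Arguments QTrue {V}. Arguments QEq {V}. Arguments QNot {V}.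
Arguments QAnd {V}. Arguments QOr {V}.

Fixpoint qholds {G : Group} {V : Type} (e : V -> G) (f : qf V) : Prop :=
  match f with
  | QTrue => True
  | QEq a b => teval e a = teval e b
  | QNot p => ~ qholds e p
  | QAnd p q => qholds e p /\ qholds e q
  | QOr p q => qholds e p \/ qholds e q
  end.

(* An AE-sentence  forall x_0..x_{n-1} exists y_0..y_{m-1}, theta(x,y),
   with theta quantifier-free in the variables (inl i) = x_i, (inr j) = y_j. *)
Definition AE_holds (G : Group) (n m : nat) (theta : qf (fin n + fin m)) : Prop :=
  forall x : fin n -> G, exists y : fin m -> G,
    qholds (fun v => match v with inl i => x i | inr j => y j end) theta.

Definition AE_equivalent (G G' : Group) : Prop :=
  forall (n m : nat) (theta : qf (fin n + fin m)),
    AE_holds G n m theta <-> AE_holds G' n m theta.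

Definition is_hom {G H : Group} (f : G -> H) : Prop :=
  forall x y, f (gmul x y) = gmul (f x) (f y).

(* G is finitely presented: there are finitely many generators g_0..g_{n-1}
   generating G and finitely many relations (u_k = v_k) satisfied by them such
   that G has the universal property of the presentation < g | u_k = v_k >. *)
Definition finitely_presented (G : Group) : Prop :=
  exists (n : nat) (g : fin n -> G) (rels : list (term (fin n) * term (fin n))),
    (forall x : G, exists t : term (fin n), teval g t = x) /\
    (forall r, In r rels -> teval g (fst r) = teval g (snd r)) /\
    (forall (H : Group) (h : fin n -> H),
        (forall r, In r rels -> teval h (fst r) = teval h (snd r)) ->
        exists f : G -> H, is_hom f /\ forall i, f (g i) = h i).

Definition subgroup {G : Group} (S : G -> Prop) : Prop :=
  S gone /\ (forall x y, S x -> S y -> S (gmul x y)) /\ (forall x, S x -> S (ginv x)).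

Definition finite_subgroup {G : Group} (S : G -> Prop) : Prop :=
  subgroup S /\ exists l : list G, forall x, S x -> In x l.

Definition conjugate {G : Group} (H K : G -> Prop) : Prop :=
  exists g : G, forall x, K x <-> exists h, H h /\ x = gmul (gmul g h) (ginv g).

Definition finitely_many_conj_classes_finite_subgroups (G : Group) : Prop :=
  exists l : list (G -> Prop),
    forall H, finite_subgroup H -> exists K, In K l /\ conjugate H K.

Definition image {G G' : Group} (f : G -> G') (S : G -> Prop) : G' -> Prop :=
  fun y => exists x, S x /\ f x = y.

From Stdlib Require Import List ClassicalEpsilon.

(* Write G = <g | R> and pick finite lists S_1, ..., S_k representing the
   conjugacy classes of finite subgroups of G.  The quantifier-free formula
   theta(x, z) says: x satisfies R, the words representing the elements of each
   S_i take pairwise distinct values at x, and z does not conjugate the values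
   of S_i onto those of S_j whenever S_i and S_j are not conjugate in G.  The
   sentence "exists x, forall z, theta(x, z)" holds in G (take x = g), hence in
   G' by AE-equivalence.  A witness x' satisfies R, so g |-> x' extends to a
   morphism phi, and "theta(x', z) for all z" says exactly that phi is
   injective on each S_i and keeps non-conjugate S_i, S_j non-conjugate.
   Conjugation transfers both properties to all finite subgroups. *)

Section GroupFacts.
Variable G : Group.

Lemma gmul_left_cancel (a b c : G) : gmul a b = gmul a c -> b = c.
Proof.
  intro E. transitivity (gmul (ginv a) (gmul a b)).
  - rewrite gmulA, gmulVl, gmul1l; reflexivity.
  - rewrite E, gmulA, gmulVl, gmul1l; reflexivity.
Qed.

Lemma gmulV (x : G) : gmul x (ginv x) = gone.
Proof.
  set (y := gmul x (ginv x)).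
  assert (yy : gmul y y = y).
  { unfold y. rewrite <- gmulA, (gmulA G (ginv x) x), gmulVl, gmul1l. reflexivity. }
  transitivity (gmul (ginv y) (gmul y y)).
  - rewrite gmulA, gmulVl, gmul1l; reflexivity.
  - rewrite yy. apply gmulVl.
Qed.

Lemma gmul1r (x : G) : gmul x gone = x.
Proof. rewrite <- (gmulVl G x), gmulA, gmulV, gmul1l. reflexivity. Qed.

Lemma ginv1 : ginv (@gone G) = gone.
Proof. rewrite <- (gmulVl G gone) at 2. symmetry. apply gmul1r. Qed.

Lemma ginvM (a b : G) : ginv (gmul a b) = gmul (ginv b) (ginv a).
Proof.
  apply (gmul_left_cancel (gmul a b)). rewrite gmulV.
  rewrite <- gmulA, (gmulA G b), gmulV, gmul1l, gmulV. reflexivity.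
Qed.

Definition gconj (g h : G) : G := gmul (gmul g h) (ginv g).

Lemma gconjM (a b h : G) : gconj a (gconj b h) = gconj (gmul a b) h.
Proof. unfold gconj. rewrite ginvM, !gmulA. reflexivity. Qed.

Lemma gconj1 (h : G) : gconj gone h = h.
Proof. unfold gconj. rewrite gmul1l, ginv1. apply gmul1r. Qed.

Lemma gconjK (g h : G) : gconj (ginv g) (gconj g h) = h.
Proof. rewrite gconjM, gmulVl. apply gconj1. Qed.

Lemma gconj_inj (g a b : G) : gconj g a = gconj g b -> a = b.
Proof. intro E. rewrite <- (gconjK g a), <- (gconjK g b), E. reflexivity. Qed.

End GroupFacts.

Arguments gconj {G}.

Section Homomorphisms.
Variables (G H : Group) (phi : G -> H).
Hypothesis phi_hom : is_hom phi.

Lemma hom1 : phi gone = gone.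
Proof.
  apply (gmul_left_cancel H (phi gone)). rewrite <- phi_hom, gmul1l, gmul1r. reflexivity.
Qed.

Lemma homV (x : G) : phi (ginv x) = ginv (phi x).
Proof.
  apply (gmul_left_cancel H (phi x)). rewrite <- phi_hom, !gmulV. apply hom1.
Qed.

Lemma hom_gconj (g h : G) : phi (gconj g h) = gconj (phi g) (phi h).
Proof. unfold gconj. rewrite !phi_hom, homV. reflexivity. Qed.

Lemma hom_teval {V : Type} (g : V -> G) (x : V -> H) :
  (forall v, phi (g v) = x v) -> forall t, phi (teval g t) = teval x t.
Proof.
  intros phi_g t. induction t; simpl.
  - apply phi_g.
  - apply hom1.
  - rewrite phi_hom; congruence.
  - rewrite homV; congruence.
Qed.

End Homomorphisms.

(* [conjugate H K] unfolds to [exists g, conj_by g H K]. *)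
Definition conj_by {G : Group} (g : G) (H K : G -> Prop) : Prop :=
  forall x, K x <-> exists h, H h /\ x = gconj g h.

Section Conjugacy.
Variable G : Group.
Implicit Types H K M : G -> Prop.

Lemma conjugate_of_equiv H K : (forall x, H x <-> K x) -> conjugate H K.
Proof.
  intro HK. exists gone. intro x. rewrite <- HK. split.
  - intro Hx. exists x. split; [exact Hx | symmetry; apply gconj1].
  - intros [h [Hh ->]]. change (H (gconj gone h)). rewrite gconj1. exact Hh.
Qed.

Lemma conjugate_sym H K : conjugate H K -> conjugate K H.
Proof.
  intros [g Hg]. exists (ginv g). intro x. split.
  - intro Hx. exists (gconj g x). split.
    + apply Hg. exists x. split; auto.
    + symmetry. apply gconjK.
  - intros [h [Hh ->]]. apply Hg in Hh. destruct Hh as [h' [Hh' ->]].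
    change (H (gconj (ginv g) (gconj g h'))). rewrite gconjK. exact Hh'.
Qed.

Lemma conjugate_trans H K M : conjugate H K -> conjugate K M -> conjugate H M.
Proof.
  intros [g Hg] [g' Hg']. exists (gmul g' g). intro x. split.
  - intro Mx. apply Hg' in Mx. destruct Mx as [k [Kk ->]].
    apply Hg in Kk. destruct Kk as [h [Hh ->]].
    exists h. split; [exact Hh | apply gconjM].
  - intros [h [Hh ->]]. apply Hg'. exists (gconj g h). split.
    + apply Hg. exists h. auto.
    + symmetry. apply gconjM.
Qed.

Lemma conjugate_congr H H' K K' :
  conjugate H H' -> conjugate K K' -> conjugate H K -> conjugate H' K'.
Proof.
  intros HH' KK' HK. apply conjugate_trans with K; [| exact KK'].
  apply conjugate_trans with H; [apply conjugate_sym |]; assumption.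
Qed.

Lemma conjugate_image (G' : Group) (phi : G -> G') H K :
  is_hom phi -> conjugate H K -> conjugate (image phi H) (image phi K).
Proof.
  intros phi_hom [g Hg]. exists (phi g). intro y. split.
  - intros [x [Kx <-]]. apply Hg in Kx. destruct Kx as [h [Hh ->]].
    exists (phi h). split; [exists h; auto | apply hom_gconj; exact phi_hom].
  - intros [y' [[h [Hh <-]] ->]]. exists (gconj g h). split.
    + apply Hg. exists h. auto.
    + apply hom_gconj. exact phi_hom.
Qed.

End Conjugacy.

Definition injective_on {A B : Type} (f : A -> B) (P : A -> Prop) : Prop :=
  forall x y, P x -> P y -> f x = f y -> x = y.

Lemma hom_injective_on_conjugate (G G' : Group) (phi : G -> G') (H K : G -> Prop) :
  is_hom phi -> conjugate H K -> injective_on phi K -> injective_on phi H.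
Proof.
  intros phi_hom [c Hc] inj_K x y Hx Hy E.
  apply (gconj_inj G c). apply inj_K.
  - apply Hc. exists x. auto.
  - apply Hc. exists y. auto.
  - rewrite !(hom_gconj G G' phi phi_hom), E. reflexivity.
Qed.

Definition elems {A : Type} (s : list A) : A -> Prop := fun a => In a s.

Lemma bounded_pred_elems {A : Type} (P : A -> Prop) (l : list A) :
  (forall x, P x -> In x l) -> exists s, forall x, P x <-> elems s x.
Proof.
  intro Pl.
  exists (filter (fun x => if excluded_middle_informative (P x) then true else false) l).
  intro x. unfold elems. rewrite filter_In.
  destruct (excluded_middle_informative (P x)) as [Px | nPx]; split.
  - intro. split; auto.
  - intros [_ _]. exact Px.
  - intro Px. contradiction.
  - intros [_ F]. discriminate F.
Qed.

Lemma finite_subgroup_class_reps (G : Group) :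
  finitely_many_conj_classes_finite_subgroups G ->
  exists L : list (list G),
    forall H, finite_subgroup H -> exists S, In S L /\ conjugate H (elems S).
Proof.
  intros [l Hl].
  assert (rep_ex : forall K : G -> Prop, exists S,
             (exists H, finite_subgroup H /\ conjugate H K) -> conjugate K (elems S)).
  { intro K. destruct (classic (exists H, finite_subgroup H /\ conjugate H K))
      as [[H [[_ [lH HlH]] HK]] | none].
    - destruct (bounded_pred_elems H lH HlH) as [S HS]. exists S. intros _.
      apply conjugate_trans with H; [apply conjugate_sym; exact HK |].
      apply conjugate_of_equiv. exact HS.
    - exists nil. intro some. contradiction. }
  destruct (choice _ rep_ex) as [rep Hrep].
  exists (map rep l). intros H Hf. destruct (Hl H Hf) as [K [HK HcK]].
  exists (rep K). split; [apply in_map; exact HK |].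
  apply conjugate_trans with K; [exact HcK |]. apply Hrep. exists H. auto.
Qed.

Section Formulas.
Variable V : Type.

Definition qAnd_list {A : Type} (f : A -> qf V) (l : list A) : qf V :=
  fold_right (fun a acc => QAnd (f a) acc) QTrue l.

Definition qOr_list {A : Type} (f : A -> qf V) (l : list A) : qf V :=
  fold_right (fun a acc => QOr (f a) acc) (QNot QTrue) l.

Fixpoint trename {W : Type} (h : W -> V) (t : term W) : term V :=
  match t with
  | TVar w => TVar (h w)
  | TOne => TOne
  | TMul a b => TMul (trename h a) (trename h b)
  | TInv a => TInv (trename h a)
  end.

Definition qf_rels {W : Type} (h : W -> V) (rels : list (term W * term W)) : qf V :=
  qAnd_list (fun r => QEq (trename h (fst r)) (trename h (snd r))) rels.

Variables (A : Group) (T : A -> term V).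

Definition qf_injective_on (S : list A) : qf V :=
  qAnd_list (fun a => qAnd_list (fun b =>
    if excluded_middle_informative (a = b) then QTrue else QNot (QEq (T a) (T b))) S) S.

Definition qf_not_conj_by (z : term V) (Si Sj : list A) : qf V :=
  let qf_conj a b := QEq (T b) (TMul (TMul z (T a)) (TInv z)) in
  QOr (qOr_list (fun b => qAnd_list (fun a => QNot (qf_conj a b)) Si) Sj)
      (qOr_list (fun a => qAnd_list (fun b => QNot (qf_conj a b)) Sj) Si).

Variables (G : Group) (e : V -> G).

Lemma qholds_qAnd_list {B : Type} (f : B -> qf V) (l : list B) :
  qholds e (qAnd_list f l) <-> forall b, In b l -> qholds e (f b).
Proof.
  induction l as [|b l IH]; simpl.
  - split; [intros _ _ [] | auto].
  - rewrite IH. split.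
    + intros [Hb Hl] b' [<- | Hb']; auto.
    + auto.
Qed.

Lemma qholds_qOr_list {B : Type} (f : B -> qf V) (l : list B) :
  qholds e (qOr_list f l) <-> exists b, In b l /\ qholds e (f b).
Proof.
  induction l as [|b l IH]; simpl.
  - split; [intro F; contradiction (F I) | intros [_ [[] _]]].
  - rewrite IH. split.
    + intros [Hb | [b' [Hb' Hf]]]; eauto.
    + intros [b' [[<- | Hb'] Hf]]; eauto.
Qed.

Lemma teval_trename {W : Type} (h : W -> V) (t : term W) :
  teval e (trename h t) = teval (fun w => e (h w)) t.
Proof. induction t; simpl; congruence. Qed.

Lemma qholds_qf_rels {W : Type} (h : W -> V) (rels : list (term W * term W)) :
  qholds e (qf_rels h rels) <->
  forall r, In r rels -> teval (fun w => e (h w)) (fst r) = teval (fun w => e (h w)) (snd r).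
Proof.
  unfold qf_rels. rewrite qholds_qAnd_list. simpl.
  setoid_rewrite teval_trename. reflexivity.
Qed.

Variable f : A -> G.
Hypothesis T_eval : forall a, teval e (T a) = f a.

Lemma qholds_qf_injective_on (S : list A) :
  qholds e (qf_injective_on S) <-> injective_on f (elems S).
Proof.
  unfold qf_injective_on. rewrite qholds_qAnd_list.
  setoid_rewrite qholds_qAnd_list. split.
  - intros inj a b Ha Hb E. specialize (inj a Ha b Hb).
    destruct (excluded_middle_informative (a = b)) as [-> | ne]; [reflexivity |].
    simpl in inj. rewrite !T_eval in inj. contradiction.
  - intros inj a Ha b Hb.
    destruct (excluded_middle_informative (a = b)) as [_ | ne]; simpl; [exact I |].
    rewrite !T_eval. intro E. exact (ne (inj a b Ha Hb E)).
Qed.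

Lemma qholds_qf_not_conj_by (z : term V) (Si Sj : list A) :
  qholds e (qf_not_conj_by z Si Sj) <->
  ~ conj_by (teval e z) (image f (elems Si)) (image f (elems Sj)).
Proof.
  unfold qf_not_conj_by. simpl. rewrite !qholds_qOr_list.
  setoid_rewrite qholds_qAnd_list. simpl. setoid_rewrite T_eval.
  set (c := teval e z). unfold conj_by, image, elems. split.
  - intros [[b [Hb nb]] | [a [Ha na]]] C.
    + destruct (proj1 (C (f b))) as [h [[a [Ha <-]] E]]; [eauto |].
      exact (nb a Ha E).
    + destruct (proj2 (C (gconj c (f a)))) as [b [Hb E]]; [eauto |].
      exact (na b Hb E).
  - intro nC. apply NNPP. intro none. apply nC. intro y. split.
    + intros [b [Hb <-]]. apply NNPP. intro nb. apply none. left.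
      exists b. split; [exact Hb |]. intros a Ha E. apply nb. eauto.
    + intros [h [[a [Ha <-]] ->]]. apply NNPP. intro na. apply none. right.
      exists a. split; [exact Ha |]. intros b Hb E. apply na. eauto.
Qed.

End Formulas.

Arguments qAnd_list {V A}.
Arguments trename {V W}.
Arguments qf_rels {V W}.
Arguments qf_injective_on {V A}.
Arguments qf_not_conj_by {V A}.
Arguments qholds_qf_injective_on {V A T G e f}.
Arguments qholds_qf_not_conj_by {V A T G e f}.

Definition env {G : Group} {n m : nat} (x : fin n -> G) (y : fin m -> G) :
  fin n + fin m -> G :=
  fun v => match v with inl i => x i | inr j => y j end.

Lemma AE_equivalent_EA (G G' : Group) (n m : nat) (theta : qf (fin n + fin m)) :
  AE_equivalent G G' ->
  (exists x : fin n -> G, forall y, qholds (env x y) theta) ->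
  exists x : fin n -> G', forall y, qholds (env x y) theta.
Proof.
  intros GG' [x Hx]. apply NNPP. intro none.
  assert (AE' : AE_holds G' n m (QNot theta)).
  { intro x'. apply NNPP. intro nx'. apply none. exists x'. intro y.
    apply NNPP. intro ny. apply nx'. exists y. exact ny. }
  apply GG' in AE'. destruct (AE' x) as [y Hy]. exact (Hy (Hx y)).
Qed.

Definition fin1_0 : fin 1 := exist _ 0 (le_n 1).

Section Sentence.
Variables (G : Group) (n : nat) (rels : list (term (fin n) * term (fin n))).
Variables (word : G -> term (fin n)) (L : list (list G)).

Definition word_term (a : G) : term (fin n + fin 1) := trename inl (word a).

Definition presentation_sentence : qf (fin n + fin 1) :=
  QAnd (qf_rels inl rels)
    (QAnd (qAnd_list (qf_injective_on word_term) L)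
       (qAnd_list (fun Si => qAnd_list (fun Sj =>
          if excluded_middle_informative (conjugate (elems Si) (elems Sj)) then QTrue
          else qf_not_conj_by word_term (TVar (inr fin1_0)) Si Sj) L) L)).

Lemma qholds_presentation_sentence (G0 : Group) (x : fin n -> G0) (y : fin 1 -> G0)
    (f : G -> G0) :
  (forall a, teval x (word a) = f a) ->
  qholds (env x y) presentation_sentence <->
  (forall r, In r rels -> teval x (fst r) = teval x (snd r)) /\
  (forall S, In S L -> injective_on f (elems S)) /\
  (forall Si Sj, In Si L -> In Sj L -> ~ conjugate (elems Si) (elems Sj) ->
     ~ conj_by (y fin1_0) (image f (elems Si)) (image f (elems Sj))).
Proof.
  intro word_eval.
  assert (T_eval : forall a, teval (env x y) (word_term a) = f a).
  { intro a. unfold word_term. rewrite teval_trename. apply word_eval. }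
  unfold presentation_sentence. simpl.
  rewrite qholds_qf_rels, !qholds_qAnd_list.
  setoid_rewrite (qholds_qf_injective_on T_eval).
  setoid_rewrite qholds_qAnd_list.
  split; intros [rels_x [inj nc]]; (split; [exact rels_x | split; [exact inj |]]).
  - intros Si Sj HSi HSj nC. specialize (nc Si HSi Sj HSj).
    destruct (excluded_middle_informative (conjugate (elems Si) (elems Sj))) as [C | _];
      [contradiction |].
    rewrite (qholds_qf_not_conj_by T_eval) in nc. exact nc.
  - intros Si HSi Sj HSj.
    destruct (excluded_middle_informative (conjugate (elems Si) (elems Sj))) as [_ | nC];
      [exact I |].
    rewrite (qholds_qf_not_conj_by T_eval). exact (nc Si Sj HSi HSj nC).
Qed.

Lemma presentation_sentence_at_generators (g : fin n -> G) :
  (forall r, In r rels -> teval g (fst r) = teval g (snd r)) ->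
  (forall a, teval g (word a) = a) ->
  forall y, qholds (env g y) presentation_sentence.
Proof.
  intros g_rels word_g y.
  apply (qholds_presentation_sentence G g y (fun a => a) word_g).
  split; [exact g_rels | split].
  - intros S _ a b _ _ E. exact E.
  - intros Si Sj _ _ nC C. apply nC. exists (y fin1_0). intro w. split.
    + intro Hw. destruct (proj1 (C w)) as [h [[a [Ha <-]] E]]; [exists w; auto |].
      exists a. auto.
    + intros [h [Hh E]]. destruct (proj2 (C w)) as [b [Hb <-]]; [| exact Hb].
      exists h. split; [exists h; auto | exact E].
Qed.

End Sentence.

Theorem lemma8p8 (G G' : Group) :
  finitely_presented G ->
  finitely_many_conj_classes_finite_subgroups G ->
  AE_equivalent G G' ->
  exists phi : G -> G',
    is_hom phi /\
    (forall H : G -> Prop, finite_subgroup H ->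
       forall x y, H x -> H y -> phi x = phi y -> x = y) /\
    (forall H K : G -> Prop, finite_subgroup H -> finite_subgroup K ->
       ~ conjugate H K -> ~ conjugate (image phi H) (image phi K)).
Proof.
  intros [n [g [rels [g_gen [g_rels g_univ]]]]] classes GG'.
  destruct (finite_subgroup_class_reps G classes) as [L reps].
  destruct (choice _ g_gen) as [word word_g].
  set (theta := presentation_sentence G n rels word L).
  destruct (AE_equivalent_EA G G' n 1 theta GG') as [x' theta_x'].
  { exists g. apply presentation_sentence_at_generators; assumption. }
  assert (x'_rels : forall r, In r rels -> teval x' (fst r) = teval x' (snd r)).
  { apply (qholds_presentation_sentence G n rels word L G' x' (fun _ => gone)
             (fun a => teval x' (word a))); [reflexivity | apply theta_x']. }
  destruct (g_univ G' x' x'_rels) as [phi [phi_hom phi_g]].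
  assert (phi_word : forall a, teval x' (word a) = phi a).
  { intro a. rewrite <- (word_g a) at 2. symmetry. apply hom_teval; assumption. }
  pose proof (fun z => proj1 (qholds_presentation_sentence G n rels word L G' x'
                (fun _ => z) phi phi_word) (theta_x' _)) as theta_phi.
  exists phi. split; [exact phi_hom | split].
  - intros H Hf. destruct (reps H Hf) as [S [HS HcS]].
    apply (hom_injective_on_conjugate G G' phi H (elems S) phi_hom HcS).
    apply (theta_phi gone). exact HS.
  - intros H K Hf Kf nHK HK'.
    destruct (reps H Hf) as [Si [HSi HcSi]], (reps K Kf) as [Sj [HSj HcSj]].
    destruct (conjugate_congr G' _ _ _ _ (conjugate_image G G' phi _ _ phi_hom HcSi)
                (conjugate_image G G' phi _ _ phi_hom HcSj) HK') as [z Hz].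
    apply (proj2 (proj2 (theta_phi z)) Si Sj HSi HSj); [| exact Hz].
    intro C. apply nHK. apply (conjugate_congr G _ _ _ _ (conjugate_sym G _ _ HcSi)
                                 (conjugate_sym G _ _ HcSj) C).
Qed.
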